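(* Let $\Omega=[0,\sigma_I^{max}]$ with $\sigma_I^{max}>0$, let $g:[0,\infty)\to[0,\infty)$ be strictly increasing on $\Omega$ with $g(0)=0$, continuously differentiable on $\Omega$ with $g'(0)=0$. For constants $D_0\ge 0$, $D_1>0$ let $h(x)=g(D_0+D_1x)$. (1) Suppose $D_0+D_1x\in\Omega$ and $h(x)\in\Omega$ for all $x\in\Omega$. If there exists $\gamma<1$ such that $D_1\le\frac{\gamma}{\max_{x\in\Omega}g'(x)}$, then $h$ has exactly one fixed point $x_f$ in $\Omega$, and for every $x_0\in\Omega$ the iteration $x_{k+1}=h(x_k)$ satisfies $|x_k-x_f|\le\frac{\gamma^k}{1-\gamma}|x_0-x_f|$ for all $k\ge0$. (2) If there exists $x_1\in\Omega$ such that $\frac{1}{g'(x_1)}<D_1<\frac{x_1}{g(x_1)}$, then there exists $D_0\ge0$ such that $h(x)=g(D_0+D_1x)$ has more than one fixed point.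
   Context: Here $g$ models the channel decoder's output error probability as a function of the inverse input SINR, and $h$ is the iterative mapping of the decoder error probability across iterations; a fixed point of $h$ is an $x\ge0$ with $h(x)=x$. *)

From Stdlib Require Import Reals.
From Coquelicot Require Import Coquelicot.
Open Scope R_scope.

Definition Omega (smax : R) (x : R) : Prop := 0 <= x <= smax.

(* df is the derivative of f on the set A, taken within A
   (one-sided at the endpoints of a closed interval). *)
Definition has_derivative_on (f df : R -> R) (A : R -> Prop) : Prop :=
  forall x, A x ->
    filterlim (fun y => (f y - f x) / (y - x))
      (within (fun y => A y /\ y <> x) (locally x)) (locally (df x)).

Definition continuous_on_set (f : R -> R) (A : R -> Prop) : Prop :=
  forall x, A x -> filterlim f (within A (locally x)) (locally (f x)).

Definition strictly_increasing_on (f : R -> R) (A : R -> Prop) : Prop :=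
  forall x y, A x -> A y -> x < y -> f x < f y.

Definition is_max_on (f : R -> R) (A : R -> Prop) (M : R) : Prop :=
  (exists x, A x /\ f x = M) /\ (forall x, A x -> f x <= M).

Definition hmap (g : R -> R) (D0 D1 : R) (x : R) : R := g (D0 + D1 * x).

Definition is_fixed_point (h : R -> R) (x : R) : Prop := 0 <= x /\ h x = x.

From Stdlib Require Import Reals Lra.
From Coquelicot Require Import Coquelicot.
Open Scope R_scope.

(* (1) By the mean value theorem g is M-Lipschitz on Omega, so h is a
   contraction of Omega into itself with constant D1 M <= gamma. The
   intermediate value theorem applied to h x - x gives a fixed point; the
   contraction gives uniqueness and |x_k - x_f| <= gamma^k |x_0 - x_f|.
   (2) x = g u is a fixed point of h iff u - D1 g u = D0. The map
   phi u = u - D1 g u vanishes at 0, is positive at x1 (as D1 g x1 < x1) and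
   decreases just left of x1 (as D1 g' x1 > 1). Hence some x2 < x1 has
   phi x2 > phi x1, and any level D0 strictly between them is reached on both
   sides of x2; g maps the two roots to two distinct fixed points. *)

(* Projection of R onto [0, s]; composing with it extends a function on [0, s]
   to all of R, so that the global IVT and MVT of the standard library apply. *)
Definition clamp (s y : R) : R := Rmax 0 (Rmin s y).

Lemma clamp_id s y : Omega s y -> clamp s y = y.
Proof. unfold Omega, clamp, Rmax, Rmin; repeat destruct Rle_dec; lra. Qed.

Lemma clamp_Omega s y : 0 <= s -> Omega s (clamp s y).
Proof. unfold Omega, clamp, Rmax, Rmin; repeat destruct Rle_dec; lra. Qed.

Lemma clamp_1_lipschitz s y z : 0 <= s -> Rabs (clamp s y - clamp s z) <= Rabs (y - z).
Proof. intros; unfold clamp, Rmax, Rmin; repeat destruct Rle_dec; split_Rabs; lra. Qed.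

Lemma lipschitz_continuity (f : R -> R) K :
  0 <= K -> (forall u v, Rabs (f u - f v) <= K * Rabs (u - v)) -> continuity f.
Proof.
  intros HK Hf x e He.
  exists (e / (K + 1)); split; [apply Rdiv_lt_0_compat; lra|].
  intros y [_ Hy]; simpl in *; unfold R_dist in *.
  apply Rle_lt_trans with (K * Rabs (y - x)); [apply Hf|].
  apply Rle_lt_trans with ((K + 1) * Rabs (y - x)).
  { pose proof (Rabs_pos (y - x)); nra. }
  replace e with ((K + 1) * (e / (K + 1))) by (field; lra).
  apply Rmult_lt_compat_l; lra.
Qed.

Section DerivativeOn.

Variables (f df : R -> R) (A : R -> Prop).
Hypothesis Hd : has_derivative_on f df A.

Lemma has_derivative_on_quotient c e :
  A c -> 0 < e ->
  exists d, 0 < d /\ forall y, A y -> y <> c -> Rabs (y - c) < d ->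
    Rabs ((f y - f c) / (y - c) - df c) < e.
Proof.
  intros Hc He.
  destruct (Hd c Hc (fun z => Rabs (z - df c) < e)) as [d Hdd].
  - exists (mkposreal e He); auto.
  - exists d; split; [apply cond_pos|].
    intros y Hy Hyc Hyd; apply (Hdd y); auto.
Qed.

Lemma has_derivative_on_continuity c e :
  A c -> 0 < e ->
  exists d, 0 < d /\ forall y, A y -> Rabs (y - c) < d -> Rabs (f y - f c) < e.
Proof.
  intros Hc He.
  destruct (has_derivative_on_quotient c 1 Hc Rlt_0_1) as [d1 [Hd1 Hq]].
  set (K := Rabs (df c) + 1).
  assert (HK : 0 < K) by (unfold K; pose proof (Rabs_pos (df c)); lra).
  exists (Rmin d1 (e / K)); split.
  { apply Rmin_pos; [lra | apply Rdiv_lt_0_compat; lra]. }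
  intros y Hy Hyd.
  pose proof (Rmin_l d1 (e / K)); pose proof (Rmin_r d1 (e / K)).
  destruct (Req_dec y c) as [-> | Hyc].
  { unfold Rminus; rewrite Rplus_opp_r, Rabs_R0; lra. }
  specialize (Hq y Hy Hyc ltac:(lra)).
  set (q := (f y - f c) / (y - c)) in Hq.
  assert (Hslope : Rabs q <= K).
  { pose proof (Rabs_triang_inv q (df c)); unfold K; lra. }
  replace (f y - f c) with (q * (y - c)) by (unfold q; field; lra).
  rewrite Rabs_mult.
  apply Rle_lt_trans with (K * Rabs (y - c)).
  { apply Rmult_le_compat_r; [apply Rabs_pos | exact Hslope]. }
  replace e with (K * (e / K)) by (field; lra).
  apply Rmult_lt_compat_l; lra.
Qed.

End DerivativeOn.

Section ClampExtension.

Variables (s : R) (f df : R -> R).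
Hypothesis Hs : 0 <= s.
Hypothesis Hd : has_derivative_on f df (Omega s).

Lemma continuity_clamp_ext : continuity (fun y => f (clamp s y)).
Proof.
  intros x e He.
  destruct (has_derivative_on_continuity f df (Omega s) Hd (clamp s x) e
              (clamp_Omega s x Hs) He) as [d [Hd0 Hcont]].
  exists d; split; [lra|].
  intros y [_ Hy]; simpl in *; unfold R_dist in *.
  apply Hcont; [apply clamp_Omega; lra|].
  pose proof (clamp_1_lipschitz s y x Hs); lra.
Qed.

Lemma derivable_clamp_ext x :
  0 < x < s -> derivable_pt_lim (fun y => f (clamp s y)) x (df x).
Proof.
  intros Hx e He.
  destruct (has_derivative_on_quotient f df (Omega s) Hd x e
              (conj (Rlt_le _ _ (proj1 Hx)) (Rlt_le _ _ (proj2 Hx))) He)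
    as [d [Hd0 Hq]].
  assert (Hr : 0 < Rmin d (Rmin x (s - x))) by (repeat apply Rmin_pos; lra).
  exists (mkposreal _ Hr); intros t Ht0 Ht; simpl in Ht.
  pose proof (Rmin_l d (Rmin x (s - x))); pose proof (Rmin_r d (Rmin x (s - x))).
  pose proof (Rmin_l x (s - x)); pose proof (Rmin_r x (s - x)).
  assert (Hxt : Omega s (x + t)) by (unfold Omega; split_Rabs; lra).
  rewrite (clamp_id s (x + t) Hxt), (clamp_id s x) by (unfold Omega; lra).
  specialize (Hq (x + t) Hxt ltac:(lra)).
  replace (x + t - x) with t in Hq by ring.
  apply Hq; lra.
Qed.

Lemma derivative_bound_increment M a b :
  (forall x, Omega s x -> df x <= M) ->
  Omega s a -> Omega s b -> a <= b -> f b - f a <= M * (b - a).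
Proof.
  intros HM Ha Hb Hab.
  destruct (MVT_gen (fun y => f (clamp s y)) a b df) as [c [Hc Hmvt]].
  - intros x Hx; rewrite Rmin_left, Rmax_right in Hx by lra.
    apply is_derive_Reals, derivable_clamp_ext; unfold Omega in *; lra.
  - intros x _; apply continuity_clamp_ext.
  - rewrite Rmin_left, Rmax_right in Hc by lra.
    rewrite (clamp_id s b Hb), (clamp_id s a Ha) in Hmvt.
    rewrite Hmvt; apply Rmult_le_compat_r; [lra|].
    apply HM; unfold Omega in *; lra.
Qed.

Lemma increasing_lipschitz M :
  strictly_increasing_on f (Omega s) ->
  (forall x, Omega s x -> df x <= M) ->
  forall x y, Omega s x -> Omega s y -> Rabs (f x - f y) <= M * Rabs (x - y).
Proof.
  intros Hinc HM.
  assert (Hle : forall x y, Omega s x -> Omega s y -> x <= y ->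
            Rabs (f x - f y) <= M * Rabs (x - y)).
  { intros x y Hx Hy Hxy.
    pose proof (derivative_bound_increment M x y HM Hx Hy Hxy).
    assert (f x <= f y).
    { destruct (Req_dec x y) as [-> | Hne]; [lra|].
      apply Rlt_le, Hinc; auto; lra. }
    rewrite Rabs_left1, (Rabs_left1 (x - y)) by lra; lra. }
  intros x y Hx Hy; destruct (Rle_dec x y).
  - auto.
  - rewrite Rabs_minus_sym, (Rabs_minus_sym x); apply Hle; auto; lra.
Qed.

End ClampExtension.

Section Contraction.

Variables (s gamma : R) (h : R -> R).
Hypothesis Hgamma : 0 <= gamma.
Hypothesis Hmaps : forall x, Omega s x -> Omega s (h x).
Hypothesis Hcontr :
  forall x y, Omega s x -> Omega s y -> Rabs (h x - h y) <= gamma * Rabs (x - y).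

Lemma self_map_fixed_point : 0 <= s -> exists xf, Omega s xf /\ h xf = xf.
Proof.
  intros Hs.
  set (F := fun u => h (clamp s u) - u).
  assert (HF : continuity F).
  { apply (lipschitz_continuity F (gamma + 1)); [lra|]; intros u v; unfold F.
    pose proof (Hcontr _ _ (clamp_Omega s u Hs) (clamp_Omega s v Hs)).
    pose proof (clamp_1_lipschitz s u v Hs).
    pose proof (Rabs_triang (h (clamp s u) - h (clamp s v)) (- (u - v))).
    rewrite Rabs_Ropp in *.
    replace (h (clamp s u) - u - (h (clamp s v) - v))
      with (h (clamp s u) - h (clamp s v) + - (u - v)) by ring.
    pose proof (Rabs_pos (u - v)); nra. }
  assert (H0 : Omega s 0) by (unfold Omega; lra).
  assert (Hs' : Omega s s) by (unfold Omega; lra).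
  assert (HF0 : 0 <= F 0).
  { unfold F; rewrite clamp_id by exact H0; pose proof (Hmaps 0 H0); unfold Omega in *; lra. }
  assert (HFs : F s <= 0).
  { unfold F; rewrite clamp_id by exact Hs'; pose proof (Hmaps s Hs'); unfold Omega in *; lra. }
  destruct (IVT_cor F 0 s HF Hs ltac:(nra)) as [xf [Hxf HFxf]].
  exists xf; split; [exact Hxf|].
  unfold F in HFxf; rewrite clamp_id in HFxf by exact Hxf; lra.
Qed.

Lemma contraction_fixed_point_unique x y :
  gamma < 1 -> Omega s x -> Omega s y -> h x = x -> h y = y -> x = y.
Proof.
  intros Hg1 Hx Hy Hhx Hhy.
  pose proof (Hcontr x y Hx Hy) as Hd; rewrite Hhx, Hhy in Hd.
  pose proof (Rabs_pos (x - y)).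
  assert (Rabs (x - y) = 0) by nra.
  apply Rabs_eq_0 in H0; lra.
Qed.

Lemma contraction_iter_dist x0 xf k :
  Omega s x0 -> Omega s xf -> h xf = xf ->
  Rabs (Nat.iter k h x0 - xf) <= gamma ^ k * Rabs (x0 - xf).
Proof.
  intros Hx0 Hxf Hfix.
  assert (Hin : forall n, Omega s (Nat.iter n h x0)) by (induction n; simpl; auto).
  induction k as [| k IH]; simpl; [lra|].
  pose proof (Hcontr _ _ (Hin k) Hxf) as Hstep; rewrite Hfix in Hstep.
  rewrite Rmult_assoc; eapply Rle_trans; [exact Hstep|].
  apply Rmult_le_compat_l; assumption.
Qed.

End Contraction.

Lemma geometric_bound_weaken gamma a k :
  0 <= gamma < 1 -> 0 <= a -> gamma ^ k * a <= gamma ^ k / (1 - gamma) * a.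
Proof.
  intros Hg Ha.
  pose proof (pow_le gamma k (proj1 Hg)).
  assert (Hinv : 1 <= / (1 - gamma)).
  { rewrite <- Rinv_1 at 1; apply Rinv_le_contravar; lra. }
  replace (gamma ^ k / (1 - gamma) * a) with (/ (1 - gamma) * (gamma ^ k * a))
    by (field; lra).
  rewrite <- (Rmult_1_l (gamma ^ k * a)) at 1.
  apply Rmult_le_compat_r; [apply Rmult_le_pos|]; assumption.
Qed.

Lemma IVT_two_roots (f : R -> R) a b c :
  continuity f -> a < b < c -> f a < 0 -> 0 < f b -> f c < 0 ->
  exists u v, a <= u < b /\ b < v <= c /\ f u = 0 /\ f v = 0.
Proof.
  intros Hf Habc Ha Hb Hc.
  destruct (IVT_cor f a b Hf ltac:(lra) ltac:(nra)) as [u [Hu Hfu]].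
  destruct (IVT_cor f b c Hf ltac:(lra) ltac:(nra)) as [v [Hv Hfv]].
  exists u, v.
  assert (u <> b) by (intros ->; lra).
  assert (v <> b) by (intros ->; lra).
  repeat split; lra.
Qed.

Lemma hmap_fixed_point_of_root g D0 D1 u :
  0 <= g u -> D0 + D1 * g u = u -> is_fixed_point (hmap g D0 D1) (g u).
Proof. intros Hgu Hu; split; [exact Hgu|]; unfold hmap; now rewrite Hu. Qed.

Section IncreasingResponse.

Variables (s : R) (g dg : R -> R).
Hypothesis Hs : 0 < s.
Hypothesis Hg_nonneg : forall x, 0 <= x -> 0 <= g x.
Hypothesis Hg_incr : strictly_increasing_on g (Omega s).
Hypothesis Hg0 : g 0 = 0.
Hypothesis Hg_deriv : has_derivative_on g dg (Omega s).

Lemma hmap_lipschitz D0 D1 M :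
  0 < D1 -> (forall x, Omega s x -> dg x <= M) ->
  (forall x, Omega s x -> Omega s (D0 + D1 * x)) ->
  forall x y, Omega s x -> Omega s y ->
    Rabs (hmap g D0 D1 x - hmap g D0 D1 y) <= D1 * M * Rabs (x - y).
Proof.
  intros HD1 HM Hlin x y Hx Hy; unfold hmap.
  eapply Rle_trans.
  { apply (increasing_lipschitz s g dg (Rlt_le _ _ Hs) Hg_deriv M Hg_incr HM);
      apply Hlin; assumption. }
  replace (D0 + D1 * x - (D0 + D1 * y)) with (D1 * (x - y)) by ring.
  rewrite Rabs_mult, (Rabs_pos_eq D1) by lra; lra.
Qed.

Lemma steep_secant_left D1 x1 :
  0 < D1 -> Omega s x1 -> 0 < x1 -> / D1 < dg x1 ->
  exists x2, 0 < x2 < x1 /\ x1 - D1 * g x1 < x2 - D1 * g x2.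
Proof.
  intros HD1 Hx1 Hx1pos Hdg.
  destruct (has_derivative_on_quotient g dg (Omega s) Hg_deriv x1 (dg x1 - / D1)
              Hx1 ltac:(lra)) as [d [Hd Hq]].
  set (x2 := Rmax (x1 / 2) (x1 - d / 2)).
  assert (Hx2 : x1 / 2 <= x2 /\ x1 - d / 2 <= x2 /\ x2 < x1)
    by (unfold x2, Rmax; destruct Rle_dec; lra).
  exists x2; split; [lra|].
  specialize (Hq x2 ltac:(unfold Omega in *; lra) ltac:(lra) ltac:(split_Rabs; lra)).
  set (q := (g x2 - g x1) / (x2 - x1)) in Hq.
  assert (Hslope : 1 < D1 * q).
  { assert (/ D1 < q) by (split_Rabs; lra).
    apply (Rmult_lt_compat_l D1) in H; [rewrite Rinv_r in H|]; lra. }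
  replace (g x2) with (g x1 + q * (x2 - x1)) by (unfold q; field; lra).
  nra.
Qed.

Lemma hmap_two_fixed_points D1 x1 :
  0 < D1 -> Omega s x1 -> 0 < dg x1 -> 1 / dg x1 < D1 -> D1 < x1 / g x1 ->
  exists D0, 0 <= D0 /\
    exists xa xb, xa <> xb /\
      is_fixed_point (hmap g D0 D1) xa /\ is_fixed_point (hmap g D0 D1) xb.
Proof.
  intros HD1 Hx1 Hdx1 Hlo Hhi.
  (* g x1 = 0 is excluded since then x1 / g x1 = 0 in Rocq. *)
  assert (Hgx1 : 0 < g x1).
  { destruct (Hg_nonneg x1 (proj1 Hx1)) as [| E]; [assumption|].
    rewrite <- E, Rdiv_0_r in Hhi; lra. }
  apply Rlt_div_r in Hhi; [|lra].
  assert (Hx1pos : 0 < x1) by nra.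
  assert (Hdg : / D1 < dg x1).
  { apply Rlt_div_l in Hlo; [|lra].
    apply (Rmult_lt_reg_l D1); [lra|]; rewrite Rinv_r; lra. }
  destruct (steep_secant_left D1 x1 HD1 Hx1 Hx1pos Hdg) as [x2 [Hx2 Hsec]].
  set (D0 := ((x1 - D1 * g x1) + (x2 - D1 * g x2)) / 2).
  exists D0; split; [unfold D0; lra|].
  set (phi := fun u => clamp s u - D1 * g (clamp s u) - D0).
  assert (Hphi : continuity phi).
  { apply continuity_minus; [apply continuity_minus | apply continuity_const; now intros].
    - apply (lipschitz_continuity _ 1); [lra|]; intros u v.
      pose proof (clamp_1_lipschitz s u v (Rlt_le _ _ Hs)); lra.
    - apply continuity_scal, (continuity_clamp_ext s g dg (Rlt_le _ _ Hs) Hg_deriv). }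
  assert (HOmega : forall u, 0 <= u <= x1 -> Omega s u)
    by (intros u Hu; unfold Omega in *; lra).
  assert (Hphi_eq : forall u, 0 <= u <= x1 -> phi u = u - D1 * g u - D0)
    by (intros u Hu; unfold phi; rewrite clamp_id; auto).
  destruct (IVT_two_roots phi 0 x2 x1 Hphi ltac:(lra))
    as [ua [ub [Hua [Hub [Hpa Hpb]]]]];
    try (rewrite Hphi_eq by lra; unfold D0; try rewrite Hg0; lra).
  rewrite Hphi_eq in Hpa, Hpb by lra.
  exists (g ua), (g ub); split.
  { pose proof (Hg_incr ua ub (HOmega ua ltac:(lra)) (HOmega ub ltac:(lra)) ltac:(lra)); lra. }
  split; apply hmap_fixed_point_of_root; try (apply Hg_nonneg; lra); lra.
Qed.

End IncreasingResponse.

(* [gamma / 0 = 0] in Rocq, so [0 < D1 <= gamma / M] already rules out [M = 0]. *)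
Lemma contraction_constant_bound D1 M gamma :
  0 < D1 -> 0 <= M -> D1 <= gamma / M -> 0 <= gamma /\ D1 * M <= gamma.
Proof.
  intros HD1 HM HDM.
  destruct HM as [HM | <-].
  - apply Rle_div_r in HDM; [nra | lra].
  - rewrite Rdiv_0_r in HDM; lra.
Qed.

Theorem propositionV1
  (smax : R) (g dg : R -> R)
  (Hsmax : 0 < smax)
  (Hg_nonneg : forall x, 0 <= x -> 0 <= g x)
  (Hg_incr : strictly_increasing_on g (Omega smax))
  (Hg0 : g 0 = 0)
  (Hg_deriv : has_derivative_on g dg (Omega smax))
  (Hdg_cont : continuous_on_set dg (Omega smax))
  (Hdg0 : dg 0 = 0) :
  (* Part (1) *)
  (forall (D0 D1 : R), 0 <= D0 -> 0 < D1 ->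
     (forall x, Omega smax x -> Omega smax (D0 + D1 * x)) ->
     (forall x, Omega smax x -> Omega smax (hmap g D0 D1 x)) ->
     forall (M gamma : R), is_max_on dg (Omega smax) M ->
     gamma < 1 -> D1 <= gamma / M ->
     exists xf,
       (Omega smax xf /\ is_fixed_point (hmap g D0 D1) xf) /\
       (forall y, Omega smax y -> is_fixed_point (hmap g D0 D1) y -> y = xf) /\
       (forall x0, Omega smax x0 -> forall k : nat,
          Rabs (Nat.iter k (hmap g D0 D1) x0 - xf)
            <= gamma ^ k / (1 - gamma) * Rabs (x0 - xf)))
  /\
  (* Part (2) *)
  (forall (D1 : R), 0 < D1 ->
     (exists x1, Omega smax x1 /\ 0 < dg x1 /\
        1 / dg x1 < D1 /\ D1 < x1 / g x1) ->
     exists D0, 0 <= D0 /\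
       exists xa xb, xa <> xb /\
         is_fixed_point (hmap g D0 D1) xa /\ is_fixed_point (hmap g D0 D1) xb).
Proof.
  clear Hdg_cont.
  split.
  - intros D0 D1 _ HD1 Hlin Hmaps M gamma [_ HM] Hgamma1 HDM.
    assert (HM0 : 0 <= M) by (rewrite <- Hdg0; apply HM; unfold Omega; lra).
    destruct (contraction_constant_bound D1 M gamma HD1 HM0 HDM) as [Hgamma HDMg].
    set (h := hmap g D0 D1).
    assert (Hcontr : forall x y, Omega smax x -> Omega smax y ->
              Rabs (h x - h y) <= gamma * Rabs (x - y)).
    { intros x y Hx Hy.
      pose proof (hmap_lipschitz smax g dg Hsmax Hg_incr Hg_deriv D0 D1 M HD1 HM Hlin x y Hx Hy).
      pose proof (Rabs_pos (x - y)); unfold h; nra. }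
    destruct (self_map_fixed_point smax gamma h Hgamma Hmaps Hcontr (Rlt_le _ _ Hsmax))
      as [xf [Hxf Hfix]].
    exists xf; split; [|split].
    + repeat split; try apply Hxf; exact Hfix.
    + intros y Hy [_ Hfy].
      exact (contraction_fixed_point_unique smax gamma h Hcontr y xf Hgamma1 Hy Hxf Hfy Hfix).
    + intros x0 Hx0 k.
      eapply Rle_trans; [apply (contraction_iter_dist smax gamma h); assumption|].
      apply geometric_bound_weaken; [lra | apply Rabs_pos].
  - intros D1 HD1 [x1 [Hx1 [Hdx1 [Hlo Hhi]]]].
    exact (hmap_two_fixed_points smax g dg Hsmax Hg_nonneg Hg_incr Hg0 Hg_deriv
             D1 x1 HD1 Hx1 Hdx1 Hlo Hhi).
Qed.
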